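(* The periodic points of $\Phi_{\mathrm{Id}}\colon\mathcal{M}(2;\mathbb{C})\to\mathcal{M}(2;\mathbb{C})$, $\mathrm{M}\mapsto\mathrm{M}^2$, other than the zero matrix $\mathbf{0}$, are contained in the boundary $\partial\mathrm{W}^s_{\mathrm{Id}}(\mathbf{0})$ of the basin of attraction of $\mathbf{0}$.
   Context: $\mathrm{W}^s_{\mathrm{Id}}(\mathbf{0})=\{\mathrm{M}\in\mathcal{M}(2;\mathbb{C}):\Phi_{\mathrm{Id}}^k(\mathrm{M})\to\mathbf{0}\text{ as }k\to\infty\}$. A point is periodic if $\Phi_{\mathrm{Id}}^k(\mathrm{M})=\mathrm{M}$ for some $k\geq1$. *)

(* Complex numbers are modelled as R[i] = complex R
   for an arbitrary R : realType (the real numbers); M(2;C) = 'M[R[i]]_2 with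
   its canonical (entrywise / norm) topology from matrix_normedtype. *)
From HB Require Import structures.
From mathcomp Require Import all_boot all_order all_algebra.
From mathcomp Require Import complex.
From mathcomp Require Import all_classical all_reals all_analysis.
Set Implicit Arguments. Unset Strict Implicit. Unset Printing Implicit Defensive.
Import Order.TTheory GRing.Theory Num.Theory.
Import numFieldTopology.Exports.
Local Open Scope ring_scope.
Local Open Scope classical_set_scope.

(* Equip C = R[i] with its standard metric topology (from the modulus |z|),
   i.e. the numClosedFieldType topology of numFieldTopology, made canonical. *)
HB.instance Definition _ (R : rcfType) := PseudoPointedMetric.copy R[i] (R[i])^o.

Definition Phi_Id (R : realType) (M : 'M[R[i]]_2) : 'M[R[i]]_2 := M *m M.

Definition Ws_Id0 (R : realType) : set 'M[R[i]]_2 :=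
  [set M | (fun k : nat => iter k (@Phi_Id R) M) @ \oo --> (0 : 'M[R[i]]_2)].

Definition periodic_Id (R : realType) (M : 'M[R[i]]_2) : Prop :=
  exists k : nat, (1 <= k)%N /\ iter k (@Phi_Id R) M = M.

Definition boundary (T : topologicalType) (A : set T) : set T :=
  closure A `\` interior A.

From HB Require Import structures.
From mathcomp Require Import all_boot all_order all_algebra.
From mathcomp Require Import complex.
From mathcomp Require Import all_classical all_reals all_analysis.
Import numFieldTopology.Exports.
Import Order.TTheory GRing.Theory Num.Theory.
Local Open Scope ring_scope.
Local Open Scope classical_set_scope.

(* The orbit of a nonzero periodic point is a cycle of nonzero matrices, so it
   does not tend to 0: M is not in the basin, let alone in its interior.
   Squaring turns t *: M into t ^+ 2 *: M^2, so the k-th iterate of t *: M is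
   t ^+ (2 ^ k) times the k-th iterate of M; for |t| < 1 this is a bounded
   sequence times a null one, so t *: M is in the basin, and letting t tend
   to 1 puts M in its closure. *)

Lemma iter_mul_period {T : Type} {f : T -> T} {x : T} {p : nat} (n : nat) :
  iter p f x = x -> iter (n * p) f x = x.
Proof. by move=> fpx; elim: n => [|n IHn] //=; rewrite mulSn iterD IHn fpx. Qed.

Lemma iter_modn_period {T : Type} {f : T -> T} {x : T} {p : nat} (k : nat) :
  iter p f x = x -> iter k f x = iter (k %% p) f x.
Proof. by move=> fpx; rewrite {1}(divn_eq k p) addnC iterD iter_mul_period. Qed.

Section periodic_orbits.
Context {K : numDomainType} {V : pseudoMetricNormedZmodType K}.
Context {f : V -> V} {x : V} {p : nat}.
Hypotheses (p_gt0 : (0 < p)%N) (fpx : iter p f x = x).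

Lemma periodic_orbit_bounded : exists C, forall k, `|iter k f x| <= C.
Proof.
exists (\sum_(j < p) `|iter j f x|) => k.
rewrite (iter_modn_period k fpx) (bigD1 (Ordinal (ltn_pmod k p_gt0))) //=.
by rewrite lerDl sumr_ge0.
Qed.

Lemma periodic_orbit_not_cvg0 :
  x != 0 -> ~ (fun k => iter k f x) @ \oo --> (0 : V).
Proof.
rewrite -normr_gt0 => x_gt0 /cvgr0_norm_lt/(_ _ x_gt0)[N _ orbit_small].
have /= := orbit_small (N * p)%N (leq_pmulr N p_gt0).
by rewrite iter_mul_period // ltxx.
Qed.

End periodic_orbits.

(* [cvg_expr] needs an archimedean real field, so it is transported from R
   through the real parts of the nonnegative complex numbers `|t| and e.
   It is stated on (R[i])^o, which carries the normed structure of R[i]. *)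
Lemma cvgc_expr (R : realType) (t : R[i]) :
  `|t| < 1 -> (GRing.exp t : (R[i])^o ^nat) @ \oo --> (0 : (R[i])^o).
Proof.
have realE (z : R[i]) : 0 <= z -> z = (complex.Re z)%:C%C.
  by move=> /ger0_real/RRe_real.
move=> t_lt1; apply/cvgr0Pnorm_lt => e e_gt0.
set r := complex.Re `|t|; have tE : `|t| = r%:C%C := realE _ (normr_ge0 t).
have r_ge0 : 0 <= r by rewrite -lecR -tE normr_ge0.
have r_lt1 : `|r| < 1 by rewrite ger0_norm // -ltcR -tE.
set d := complex.Re e; have eE : e = d%:C%C := realE _ (ltW e_gt0).
have d_gt0 : 0 < d by rewrite -ltcR -eE e_gt0.
near=> n; rewrite normrX tE eE -rmorphXn ltcR -[_ ^+ n]ger0_norm ?exprn_ge0 //.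
by near: n; exact: (cvgr0_norm_lt _ (cvg_expr r_lt1)) _ d_gt0.
Unshelve. all: by end_near.
Qed.

Lemma closure_scale_lt1 (R : realType) (V : normedModType R[i])
    (A : set V) (x : V) :
  (forall t : R[i], `|t| < 1 -> A (t *: x)) -> closure A x.
Proof.
move=> scaled_in_A; pose q : R[i] := 2^-1.
have q_gt0 : 0 < q by rewrite invr_gt0.
have q_lt1 : q < 1 by rewrite invf_lt1 // ltr1n.
pose u : (R[i])^o ^nat := cst 1 - GRing.exp q.
have u_cvg1 : u @ \oo --> (1 : (R[i])^o).
  rewrite -[X in _ --> X]subr0; apply: cvgB; first exact: cvg_cst.
  by apply: cvgc_expr; rewrite gtr0_norm.
have u_cvg : (fun n => u n *: x) @ \oo --> x.
  by rewrite -[X in _ --> X]scale1r; apply: cvgZr_tmp; exact: u_cvg1.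
apply: (closed_cvg (closure A) (@closed_closure _ A) _ x u_cvg).
apply: nearW => n; apply/subset_closure/scaled_in_A; rewrite /u !fctE.
rewrite ger0_norm ?subr_ge0 ?exprn_ile1 ?ltW //.
by rewrite ltrBlDr ltrDl exprn_gt0.
Qed.

Section Phi_Id_dynamics.
Variable R : realType.
Local Notation Phi := (@Phi_Id R).
Implicit Types (t : R[i]) (M : 'M[R[i]]_2).

Lemma iter_Phi_IdZ t M k : iter k Phi (t *: M) = t ^+ (2 ^ k) *: iter k Phi M.
Proof.
elim: k => [|k IHk]; first by rewrite expr1.
rewrite !iterS IHk /Phi_Id -scalemxAl -scalemxAr scalerA -exprD.
by rewrite expnS mul2n -addnn.
Qed.

Lemma Ws_Id0_scale_bounded_orbit t M (C : R[i]) :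
  `|t| < 1 -> (forall k, `|iter k Phi M| <= C) -> Ws_Id0 (t *: M).
Proof.
move=> t_lt1 orbit_le; apply/cvgr0Pnorm_lt => e e_gt0.
have C_ge0 : 0 <= C := le_trans (normr_ge0 _) (orbit_le 0%N).
have t_ge0 : 0 <= `|t| := normr_ge0 t.
have : (fun k => `|t| ^+ k * C : (R[i])^o) @ \oo --> (0 : (R[i])^o).
  by rewrite -(mul0r C); apply: cvgMr_tmp; apply: cvgc_expr; rewrite normr_id.
move=> /cvgr0_norm_lt/(_ _ e_gt0); apply: filterS => k; apply: le_lt_trans.
rewrite iter_Phi_IdZ normrZ normrX (ger0_norm (mulr_ge0 (exprn_ge0 _ t_ge0) C_ge0)).
apply: le_trans (ler_wpM2l (exprn_ge0 _ t_ge0) (orbit_le k)) _.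
apply: ler_wpM2r => //; apply: ler_wiXn2l => //; first exact: ltW.
exact: ltnW (ltn_expl _ (ltnSn 1)).
Qed.

End Phi_Id_dynamics.

Theorem proposition3p3 (R : realType) (M : 'M[R[i]]_2) :
  periodic_Id M -> M != 0 -> boundary (@Ws_Id0 R) M.
Proof.
move=> [p [p_gt0 Mp]] M_neq0; split.
  apply: closure_scale_lt1 => t t_lt1.
  have [C orbit_le] := periodic_orbit_bounded p_gt0 Mp.
  exact: Ws_Id0_scale_bounded_orbit t_lt1 orbit_le.
by move=> /interior_subset; exact: periodic_orbit_not_cvg0 p_gt0 Mp M_neq0.
Qed.
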